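(* Let $K$ be a fan-like sphere with vertex set $[m]$ and $\Sigma$ a complete fan over $K$ with $m$ 1-cones. Choose a nonzero point $x_i$ on each 1-cone corresponding to $i\in[m]$ and let $\widehat X=(\widehat x_1,\dots,\widehat x_m)$ be a Shephard diagram for $\Sigma$ with respect to $X=(x_1,\dots,x_m)$. Then for any $i\in[m]$, the subsequence $\widehat X\setminus(\widehat x_i)$ is a Shephard diagram for $\operatorname{proj}_i\Sigma$ (with respect to the images in $\mathbb{R}^n/\operatorname{span}\{x_i\}$ of the points $x_j$, $j\ne i$).
   Context: A fan-like sphere is a simplicial $(n-1)$-sphere underlying a complete simplicial fan in $\mathbb{R}^n$. For a vertex $i$, $\operatorname{proj}_i\Sigma$ is the fan in $\mathbb{R}^n/\operatorname{span}\{x_i\}$ formed by the images of the cones of $\Sigma$ containing $x_i$; its underlying complex is $\operatorname{link}_K\{i\}$ (images of $x_j$ with $j$ not in the link may be present as extra points). Linear transform: for a sequence $X=(x_1,\dots,x_m)$ spanning $\mathbb{R}^n$, write a basis of $\{\alpha\in\mathbb{R}^m:\sum\alpha_jx_j=0\}$ as rows of an $(m-n)\times m$ matrix; its columns $\overline x_j$ form a linear transform. If $X$ positively spans $\mathbb{R}^n$, $\operatorname{pos}\overline X$ is strongly convex; choose a hyperplane $H$ not through $0$ meeting each ray $\{a\overline x_j:a>0\}$ at $\widehat x_j$; $(\widehat x_1,\dots,\widehat x_m)$ is a Shephard diagram of $X$ (a Shephard diagram for $\Sigma$ when the $x_j$ lie on the 1-cones of $\Sigma$). *)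

From HB Require Import structures.
From mathcomp Require Import all_boot all_order all_algebra.
From mathcomp Require Import reals.
Set Implicit Arguments. Unset Strict Implicit. Unset Printing Implicit Defensive.
Import Order.TTheory GRing.Theory Num.Theory.
Local Open Scope ring_scope.

(* A sequence X = (x_1,...,x_m) of vectors of R^n is encoded as the matrix
   X : 'M_(m, n) whose j-th row is x_j. *)

Section Defs.
Variable R : realType.

Definition pos_cone (m n : nat) (X : 'M[R]_(m, n)) (S : {set 'I_m})
    (v : 'rV[R]_n) : Prop :=
  exists c : 'rV[R]_m,
    (forall j, 0 <= c 0 j) /\ (forall j, j \notin S -> c 0 j = 0) /\ v = c *m X.

Definition positively_spans (m n : nat) (X : 'M[R]_(m, n)) : Prop :=
  forall v : 'rV[R]_n, pos_cone X setT v.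

Definition simplicial_complex_on (m : nat) (K : {set {set 'I_m}}) : Prop :=
  (forall s t : {set 'I_m}, s \in K -> t \subset s -> t \in K) /\
  (forall j : 'I_m, [set j] \in K).

Definition complete_simplicial_fan_over (m n : nat) (K : {set {set 'I_m}})
    (X : 'M[R]_(m, n)) : Prop :=
  (forall s, s \in K -> forall c : 'rV[R]_m,
      (forall j, j \notin s -> c 0 j = 0) -> c *m X = 0 -> c = 0) /\
  (* fan: cones intersect in common faces *)
  (forall s t, s \in K -> t \in K -> forall v,
      (pos_cone X s v /\ pos_cone X t v) <-> pos_cone X (s :&: t) v) /\
  (forall v : 'rV[R]_n, exists2 s, s \in K & pos_cone X s v).

(* B : 'M_(k, m) is a linear transform of X: X spans R^n and the rows of B form
   a basis of the space {alpha in R^m | sum_j alpha_j x_j = 0}. The columns of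
   B are xbar_1, ..., xbar_m. *)
Definition linear_transform (m n k : nat) (X : 'M[R]_(m, n)) (B : 'M[R]_(k, m))
    : Prop :=
  row_full X /\ row_free B /\ (B == kermx X)%MS.

(* Xhat : 'M_(k, m) (columns xhat_j) is a Shephard diagram of X: X positively
   spans, and for some linear transform B of X and some affine hyperplane
   H = {y | h y = 1} (not through 0), xhat_j is the intersection of H with the
   ray {a xbar_j | a > 0}. *)
Definition shephard_diagram (m n k : nat) (X : 'M[R]_(m, n)) (Xhat : 'M[R]_(k, m))
    : Prop :=
  positively_spans X /\
  exists B : 'M[R]_(k, m), linear_transform X B /\
  exists h : 'rV[R]_k, forall j : 'I_m,
    (h *m col j Xhat) 0 0 = 1 /\ exists2 a : R, 0 < a & col j Xhat = a *: col j B.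

End Defs.

From HB Require Import structures.
From mathcomp Require Import all_boot all_order all_algebra.
From mathcomp Require Import reals.
Import Order.TTheory GRing.Theory Num.Theory.
Local Open Scope ring_scope.

(* The linear transform of X_i := (x_j P)_(j <> i) is obtained from that of X
   by deleting the i-th column.  Indeed, since x_i P = 0, a relation
   sum_(j <> i) a_j x_j P = 0 lifts to a relation of X by choosing the i-th
   coefficient with sum_(j <> i) a_j x_j = - a_i x_i (the kernel of P is the
   line through x_i); conversely, deleting the i-th coefficient of a relation
   of X gives a relation of X_i.  The deletion is injective on relations of X
   because x_i <> 0.  Positive spanning passes to the image under the
   surjection P, and the normalization onto the hyperplane is column-wise. *)

Set Implicit Arguments.
Unset Strict Implicit.

Section DeleteIndex.
Variable F : fieldType.

Lemma row'_mulmx m n p (i : 'I_m) (A : 'M[F]_(m, n)) (B : 'M[F]_(n, p)) :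
  row' i (A *m B) = row' i A *m B.
Proof. by apply/matrixP => r c; rewrite !mxE; apply: eq_bigr => j _; rewrite !mxE. Qed.

Lemma col'_mulmx m n p (i : 'I_m) (A : 'M[F]_(p, n)) (B : 'M[F]_(n, m)) :
  col' i (A *m B) = A *m col' i B.
Proof. by apply/matrixP => r c; rewrite !mxE; apply: eq_bigr => j _; rewrite !mxE. Qed.

Lemma col'_col m p (i : 'I_m) j (A : 'M[F]_(p, m)) :
  col j (col' i A) = col (lift i j) A.
Proof. by apply/colP => r; rewrite !mxE. Qed.

Lemma mulmx_col_row' m n p (i : 'I_m) (A : 'M[F]_(p, m)) (X : 'M[F]_(m, n)) :
  A *m X = col i A *m row i X + col' i A *m row' i X.
Proof.
apply/matrixP => r c; rewrite !mxE (bigD1_ord i (P:=xpredT)) // big_ord1 !mxE.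
by congr (_ + _); apply: eq_bigr => j _; rewrite !mxE.
Qed.

Lemma mulmx_row_row' m n (i : 'I_m) (a : 'rV[F]_m) (X : 'M[F]_(m, n)) :
  a *m X = a 0 i *: row i X + col' i a *m row' i X.
Proof.
rewrite (mulmx_col_row' i); congr (_ + _).
by apply/rowP => c; rewrite !mxE big_ord1 !mxE.
Qed.

Lemma mulmx_col'_row'_proj m n p q (i : 'I_m) (A : 'M[F]_(p, m))
    (X : 'M[F]_(m, n)) (P : 'M[F]_(n, q)) :
  row i X *m P = 0 -> col' i A *m row' i (X *m P) = A *m X *m P.
Proof.
move=> XiP; rewrite row'_mulmx mulmxA (mulmx_col_row' i A X) mulmxDl.
by rewrite -(mulmxA (col i A)) XiP mulmx0 add0r.
Qed.

Definition row_ins m (i : 'I_m) (w : 'rV[F]_m.-1) (t : F) : 'rV[F]_m :=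
  \row_j oapp (fun j' => w 0 j') t (unlift i j).

Lemma row_ins_id m (i : 'I_m) w t : row_ins i w t 0 i = t.
Proof. by rewrite mxE unlift_none. Qed.

Lemma col'_row_ins m (i : 'I_m) w t : col' i (row_ins i w t) = w.
Proof. by apply/rowP => j; rewrite !mxE liftK. Qed.

Lemma col'_inj_ker m n (i : 'I_m) (X : 'M[F]_(m, n)) (a : 'rV[F]_m) :
  row i X != 0 -> a *m X = 0 -> col' i a = 0 -> a = 0.
Proof.
move=> Xi0 aX a'0; have ai0 : a 0 i = 0.
  move: aX; rewrite (mulmx_row_row' i) a'0 mul0mx addr0 => /eqP.
  by rewrite scaler_eq0 (negbTE Xi0) orbF => /eqP.
apply/rowP => j; case: (unliftP i j) => [j'|] ->; last by rewrite ai0 mxE.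
by move/rowP: a'0 => /(_ j'); rewrite !mxE.
Qed.

Section KernelProjection.
Variables (m n k d : nat) (i : 'I_m).
Variables (X : 'M[F]_(m, n)) (B : 'M[F]_(k, m)) (P : 'M[F]_(n, d)).
Hypothesis kerX : (B == kermx X)%MS.
Hypothesis kerP : (kermx P == row i X)%MS.

Let XiP : row i X *m P = 0.
Proof. by apply/sub_kermxP; case/andP: kerP. Qed.

Let BX : B *m X = 0.
Proof. by apply/sub_kermxP; case/andP: kerX. Qed.

Lemma row_free_col'_ker : row_free B -> row i X != 0 -> row_free (col' i B).
Proof.
move=> freeB Xi0; apply: inj_row_free => u uB'.
apply: (row_free_inj freeB); rewrite mul0mx.
apply: (col'_inj_ker Xi0); first by rewrite -mulmxA BX mulmx0.
by rewrite col'_mulmx.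
Qed.

Lemma col'_ker_proj : (col' i B == kermx (row' i (X *m P)))%MS.
Proof.
apply/andP; split.
  by apply/sub_kermxP; rewrite mulmx_col'_row'_proj // BX mul0mx.
apply/row_subP => r; set w := row r _.
have : (w *m row' i X <= row i X)%MS.
  case/andP: kerP => sub_ker _; apply: submx_trans sub_ker; apply/sub_kermxP.
  by rewrite -mulmxA -row'_mulmx; apply/sub_kermxP; apply: row_sub.
case/submxP => D wX.
have aX : row_ins i w (- D 0 0) *m X = 0.
  rewrite (mulmx_row_row' i) row_ins_id col'_row_ins wX.
  by rewrite {2}[D]mx11_scalar mul_scalar_mx scaleNr addNr.
have /submxP[E aB] : (row_ins i w (- D 0 0) <= B)%MS.
  by case/andP: kerX => _; apply: submx_trans; apply/sub_kermxP.
by apply/submxP; exists E; rewrite -col'_mulmx -aB col'_row_ins.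
Qed.

End KernelProjection.
End DeleteIndex.

Section ShephardProjection.
Variable R : realType.

Lemma positively_spans_row_full m n (X : 'M[R]_(m, n)) :
  positively_spans X -> row_full X.
Proof.
move=> Xpos; rewrite -sub1mx; apply/row_subP => r.
by case: (Xpos (row r 1%:M)) => c [_ [_ ->]]; apply/submxP; exists c.
Qed.

Lemma positively_spans_proj m n d (i : 'I_m) (X : 'M[R]_(m, n))
    (P : 'M[R]_(n, d)) :
  positively_spans X -> row_full P -> row i X *m P = 0 ->
  positively_spans (row' i (X *m P)).
Proof.
move=> Xpos /row_fullP[Q QP] XiP w.
have [c [c_ge0 [_ wQ]]] := Xpos (w *m Q).
exists (col' i c); split; first by move=> j; rewrite mxE.
split; first by move=> j; rewrite in_setT.
by rewrite mulmx_col'_row'_proj // -wQ -mulmxA QP mulmx1.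
Qed.

End ShephardProjection.

Theorem proposition5p10 (R : realType) (m n k : nat)
    (K : {set {set 'I_m}}) (X : 'M[R]_(m, n)) (Xhat : 'M[R]_(k, m)) :
  simplicial_complex_on K ->
  complete_simplicial_fan_over K X ->
  (forall j : 'I_m, row j X != 0) ->
  shephard_diagram X Xhat ->
  forall (i : 'I_m) (d : nat) (P : 'M[R]_(n, d)),
    row_full P -> (kermx P == row i X)%MS ->
    shephard_diagram (row' i (X *m P)) (col' i Xhat).
Proof.
move=> _ _ X_nz [Xpos [B [[_ [freeB kerX]] [h Xhat_B]]]] i d P fullP kerP.
have XiP : row i X *m P = 0 by apply/sub_kermxP; case/andP: kerP.
have Ypos := positively_spans_proj Xpos fullP XiP.
split=> //; exists (col' i B); split.
  split; first exact: positively_spans_row_full.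
  split; first exact: row_free_col'_ker kerX freeB (X_nz i).
  exact: col'_ker_proj kerX kerP.
by exists h => j; rewrite !col'_col; apply: Xhat_B.
Qed.
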